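(* Let $\xi=e^{i\pi/5}$, $\tau=\frac{1+\sqrt5}{2}$, $L(n)=\{\sum_{j=0}^9 n_j\xi^j: n_j\in\mathbb{N}_0,\ \sum_j n_j\le n\}\cap\mathbb{R}$ for $n\in\mathbb{N}$, $x\mapsto x'$ the automorphism $a+b\sqrt5\mapsto a-b\sqrt5$ of $\mathbb{Q}[\sqrt5]$, and $\Sigma([-n,n])=\{x\in\mathbb{Z}+\mathbb{Z}\tau: x'\in[-n,n]\}$. Then the minimal distance between distinct points of $L(n)$ is greater than or equal to the minimal distance between distinct points of $\Sigma([-n,n])$.
   Context: The minimal distance of a set $S\subset\mathbb{R}$ is $\inf\{|x-y|: x,y\in S,\ x\neq y\}$. *)

From Stdlib Require Import Reals.
From Coquelicot Require Import Coquelicot.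
Open Scope R_scope.

Definition xi : C := (cos (PI / 5), sin (PI / 5)).

Definition tau : R := (1 + sqrt 5) / 2.

(* Galois conjugation of Q[sqrt 5] on Z + Z tau:  (a + b tau)' = a + b tau',
   with tau' = (1 - sqrt 5)/2. *)
Definition tau' : R := (1 - sqrt 5) / 2.

Definition Lset (n : nat) (x : R) : Prop :=
  exists c : nat -> nat,
    sum_n (fun j => INR (c j)) 9 <= INR n /\
    sum_n (fun j => Cmult (RtoC (INR (c j))) (pow_n xi j)) 9 = RtoC x.

Definition Sigma (n : nat) (x : R) : Prop :=
  exists a b : Z,
    x = IZR a + IZR b * tau /\
    - INR n <= IZR a + IZR b * tau' <= INR n.

(* minimal distance: inf { |x - y| : x, y in S, x <> y } in Rbar
   (the infimum of the empty set is +oo) *)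
Definition min_dist (S : R -> Prop) : Rbar :=
  Glb_Rbar (fun d => exists x y, S x /\ S y /\ x <> y /\ d = Rabs (x - y)).

(* Every point of L(n) lies in Sigma([-n,n]), so the infimum defining the
   minimal distance of Sigma([-n,n]) runs over a larger set.  For the
   inclusion, fold the coefficients of x = sum c_j xi^j with xi^(j+5) = - xi^j
   into d_j = c_j - c_(j+5), j < 5.  Since Im xi^2 = tau Im xi and tau is
   irrational, Im x = 0 forces d_4 = - d_1 and d_3 = - d_2, whence
   x = (d_0 - d_2) + (d_1 + d_2) tau.  Its conjugate d_0 + d_1 tau' - d_2 tau
   is bounded by |d_0| + 2|d_1| + 2|d_2| = sum |d_j| <= sum c_j <= n. *)

From Stdlib Require Import Reals Lra Lia ZArith.
From Coquelicot Require Import Coquelicot.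
Open Scope R_scope.

Lemma min_dist_le_subset (S T : R -> Prop) :
  (forall x, S x -> T x) -> Rbar_le (min_dist T) (min_dist S).
Proof.
  intros HST. eapply is_glb_Rbar_subset; [| apply Glb_Rbar_correct ..].
  intros d (x & y & Sx & Sy & Hxy & ->). exists x, y. auto.
Qed.

Lemma sqrt5_sqr : sqrt 5 * sqrt 5 = 5.
Proof. apply sqrt_sqrt; lra. Qed.

Lemma tau_sqr : tau * tau = tau + 1.
Proof. unfold tau. pose proof sqrt5_sqr. nra. Qed.

Lemma tau_bounds : 1 < tau < 2.
Proof. unfold tau. pose proof sqrt5_sqr. pose proof (sqrt_pos 5). nra. Qed.

Lemma tau'_eq : tau' = 1 - tau.
Proof. unfold tau, tau'. field. Qed.

(* [cos (3 PI/5) = - cos (2 PI/5)] makes [c = cos (PI/5)] a root of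
   [(c + 1) (4 c^2 - 2 c - 1)]. *)
Lemma cos_PI5 : cos (PI / 5) = tau / 2.
Proof.
  set (t := PI / 5).
  assert (Hpos : 0 < cos t) by (apply cos_gt_0; unfold t; pose proof PI_RGT_0; lra).
  assert (H3 : cos (2 * t + t) = - cos (2 * t)).
  { replace (2 * t + t) with (PI - 2 * t) by (unfold t; field).
    apply Rtrigo_facts.cos_pi_minus. }
  rewrite cos_plus, cos_2a_cos, sin_2a in H3.
  pose proof (sin2_cos2 t) as Hpyth. unfold Rsqr in Hpyth.
  assert (Hquad : 4 * cos t * cos t - 2 * cos t - 1 = 0).
  { assert (Hfact : (cos t + 1) * (4 * cos t * cos t - 2 * cos t - 1) = 0) by nra.
    destruct (Rmult_integral _ _ Hfact); [lra | assumption]. }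
  pose proof sqrt5_sqr. pose proof (sqrt_pos 5).
  assert (Hroots : (4 * cos t - 1 - sqrt 5) * (4 * cos t - 1 + sqrt 5) = 0) by nra.
  unfold tau. destruct (Rmult_integral _ _ Hroots); nra.
Qed.

Lemma sin_PI5_pos : 0 < sin (PI / 5).
Proof. apply sin_gt_0; pose proof PI_RGT_0; lra. Qed.

Lemma sin_PI5_sqr : sin (PI / 5) * sin (PI / 5) = (3 - tau) / 4.
Proof.
  pose proof (sin2_cos2 (PI / 5)) as Hpyth. unfold Rsqr in Hpyth.
  rewrite cos_PI5 in Hpyth. pose proof tau_sqr. nra.
Qed.

Lemma xi_pow_S j a b : pow_n xi j = (a, b) ->
  pow_n xi (S j) = (a * (tau / 2) - b * sin (PI / 5), a * sin (PI / 5) + b * (tau / 2)).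
Proof.
  intros Hj. change (pow_n xi (S j)) with (Cmult xi (pow_n xi j)).
  rewrite Hj. unfold xi, Cmult. rewrite cos_PI5. simpl. f_equal; ring.
Qed.

Ltac xi_pow_step prev :=
  rewrite (xi_pow_S _ _ _ prev);
  pose proof tau_sqr; pose proof (f_equal (Rmult tau) sin_PI5_sqr);
  pose proof (f_equal (Rmult (sin (PI / 5))) tau_sqr);
  f_equal; nra.

Lemma xi_pow_1 : pow_n xi 1 = (tau / 2, sin (PI / 5)).
Proof. xi_pow_step (eq_refl : pow_n xi 0 = (1, 0)). Qed.
Lemma xi_pow_2 : pow_n xi 2 = ((tau - 1) / 2, tau * sin (PI / 5)).
Proof. xi_pow_step xi_pow_1. Qed.
Lemma xi_pow_3 : pow_n xi 3 = ((1 - tau) / 2, tau * sin (PI / 5)).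
Proof. xi_pow_step xi_pow_2. Qed.
Lemma xi_pow_4 : pow_n xi 4 = (- tau / 2, sin (PI / 5)).
Proof. xi_pow_step xi_pow_3. Qed.
Lemma xi_pow_5 : pow_n xi 5 = (-1, 0).
Proof. xi_pow_step xi_pow_4. Qed.

Lemma xi_pow_add5 j : pow_n xi (j + 5) = Copp (pow_n xi j).
Proof.
  induction j as [|j IH].
  - change (pow_n xi 5 = Copp (1, 0)). rewrite xi_pow_5. unfold Copp. simpl. f_equal; ring.
  - change (Cmult xi (pow_n xi (j + 5)) = Copp (Cmult xi (pow_n xi j))).
    rewrite IH. destruct (pow_n xi j). unfold Cmult, Copp. simpl. f_equal; ring.
Qed.

(* The coefficient of [xi ^ j], [j < 5], once [xi ^ (j + 5) = - xi ^ j] is used. *)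
Definition fold5 (c : nat -> nat) (j : nat) : Z :=
  (Z.of_nat (c j) - Z.of_nat (c (j + 5)%nat))%Z.

Lemma sum_xi_pow_coords (c : nat -> nat) :
  sum_n (fun j => Cmult (RtoC (INR (c j))) (pow_n xi j)) 9 =
  (IZR (fold5 c 0) + IZR (fold5 c 1 - fold5 c 4) * (tau / 2)
     + IZR (fold5 c 2 - fold5 c 3) * ((tau - 1) / 2),
   (IZR (fold5 c 1 + fold5 c 4) + IZR (fold5 c 2 + fold5 c 3) * tau) * sin (PI / 5)).
Proof.
  rewrite !sum_Sn, sum_O.
  rewrite (xi_pow_add5 0 : pow_n xi 5 = _), (xi_pow_add5 1 : pow_n xi 6 = _),
    (xi_pow_add5 2 : pow_n xi 7 = _), (xi_pow_add5 3 : pow_n xi 8 = _),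
    (xi_pow_add5 4 : pow_n xi 9 = _), xi_pow_1, xi_pow_2, xi_pow_3, xi_pow_4.
  unfold fold5. rewrite !plus_IZR, !minus_IZR, <- !INR_IZR_INZ.
  unfold plus. simpl. unfold Cplus, Cmult, Copp, RtoC. simpl.
  f_equal; field.
Qed.

Lemma fold5_weight_le (c : nat -> nat) (n : nat) :
  sum_n (fun j => INR (c j)) 9 <= INR n ->
  (Z.abs (fold5 c 0) + Z.abs (fold5 c 1) + Z.abs (fold5 c 2) + Z.abs (fold5 c 3)
     + Z.abs (fold5 c 4) <= Z.of_nat n)%Z.
Proof.
  intros Hsum. rewrite !sum_Sn, sum_O in Hsum. unfold plus in Hsum. simpl in Hsum.
  rewrite <- !plus_INR in Hsum. apply INR_le in Hsum.
  unfold fold5. simpl. lia.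
Qed.

(* Descent: [5] divides [m], and then [(q, m / 5)] is a smaller solution. *)
Lemma Z_sqr_eq_5_sqr (m q : Z) : (m * m = 5 * (q * q))%Z -> q = 0%Z.
Proof.
  remember (Z.abs_nat q) as k eqn:Hk. revert m q Hk.
  induction k as [k IH] using lt_wf_ind. intros m q Hk Hmq.
  destruct (Z.eq_dec q 0) as [|Hq]; [assumption | exfalso].
  pose proof (Z.div_mod m 5 ltac:(lia)) as Hdiv.
  pose proof (Z.mod_pos_bound m 5 ltac:(lia)) as Hmod.
  set (r := (m mod 5)%Z) in *. set (m' := (m / 5)%Z) in *.
  assert (Hr : r = 0%Z).
  { assert (Er : (r * r = 5 * (q * q - 5 * m' * m' - 2 * m' * r))%Z)
      by (rewrite Hdiv in Hmq; lia).
    assert (r = 0 \/ r = 1 \/ r = 2 \/ r = 3 \/ r = 4)%Z as Hcases by lia.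
    destruct Hcases as [|[|[|[|]]]]; subst r; lia. }
  assert (Hq' : (q * q = 5 * (m' * m'))%Z) by (rewrite Hr in Hdiv; rewrite Hdiv in Hmq; lia).
  assert (Hm' : m' = 0%Z).
  { apply (IH (Z.abs_nat m') ltac:(subst k; nia) q m' eq_refl Hq'). }
  rewrite Hm' in Hq'. nia.
Qed.

Lemma Z_plus_Z_tau_eq0 (a b : Z) : IZR a + IZR b * tau = 0 -> a = 0%Z /\ b = 0%Z.
Proof.
  intros H. unfold tau in H.
  assert (Hsqr : IZR ((2 * a + b) * (2 * a + b)) = IZR (5 * (b * b))).
  { assert (Hlin : 2 * IZR a + IZR b = - IZR b * sqrt 5) by lra.
    rewrite !mult_IZR, plus_IZR, mult_IZR, Hlin. pose proof sqrt5_sqr. simpl. nra. }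
  apply eq_IZR, Z_sqr_eq_5_sqr in Hsqr. subst b.
  split; [apply eq_IZR; lra | reflexivity].
Qed.

(* The combination is [d0 + d1 tau' + d2 (tau' - 1)], and [|tau'| < 1], [|tau' - 1| = tau < 2]. *)
Lemma Rabs_tau'_combination_le (d0 d1 d2 : R) :
  Rabs (d0 - d2 + (d1 + d2) * tau') <= Rabs d0 + 2 * Rabs d1 + 2 * Rabs d2.
Proof.
  rewrite tau'_eq. pose proof tau_bounds.
  unfold Rabs. repeat destruct Rcase_abs; nra.
Qed.

Lemma Lset_incl_Sigma (n : nat) (x : R) : Lset n x -> Sigma n x.
Proof.
  intros (c & Hweight & Hx).
  apply fold5_weight_le in Hweight.
  rewrite sum_xi_pow_coords in Hx. unfold RtoC in Hx. injection Hx as Hre Him.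
  assert (Himag : (fold5 c 1 + fold5 c 4 = 0)%Z /\ (fold5 c 2 + fold5 c 3 = 0)%Z).
  { apply Z_plus_Z_tau_eq0.
    pose proof sin_PI5_pos.
    destruct (Rmult_integral _ _ Him); [assumption | lra]. }
  set (e := fold5 c) in *. clearbody e.
  assert (He4 : e 4%nat = (- e 1%nat)%Z) by lia.
  assert (He3 : e 3%nat = (- e 2%nat)%Z) by lia.
  rewrite He3, He4 in *.
  exists (e 0%nat - e 2%nat)%Z, (e 1%nat + e 2%nat)%Z. split.
  - rewrite <- Hre. rewrite !minus_IZR, !plus_IZR, !opp_IZR. field.
  - apply Rabs_le_between. eapply Rle_trans.
    { rewrite minus_IZR, plus_IZR. apply Rabs_tau'_combination_le. }
    rewrite <- !abs_IZR, INR_IZR_INZ. rewrite <- !mult_IZR, <- !plus_IZR.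
    apply IZR_le. lia.
Qed.

Theorem lemma6p12 (n : nat) (hn : (1 <= n)%nat) :
  Rbar_le (min_dist (Sigma n)) (min_dist (Lset n)).
Proof.
  apply min_dist_le_subset, Lset_incl_Sigma.
Qed.
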